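(* Let $\psi:\mathsf{Pol}\to\mathsf{N}$ be a linear map with $\psi(1)=\psi(x_i)=0$ for $1\le i\le n$, and let $\phi:\mathsf{N}\times\mathsf{N}\to\mathsf{N}$ be a bidifferential operator vanishing on constants (i.e. $\phi(c,f)=\phi(f,c)=0$ for constants $c$). Suppose that for every $k\ge2$ and every choice of indices $i_1,\dots,i_k\in\{1,\dots,n\}$, $$\sum_{(i_1,\ldots,i_k)}\delta\psi(x_{i_1},x_{i_2}\cdots x_{i_k})=\sum_{(i_1,\ldots,i_k)}\phi(x_{i_1},x_{i_2}\cdots x_{i_k}).$$ Then $\psi$ is the restriction to $\mathsf{Pol}$ of a differential operator on $\mathsf{N}$ vanishing on constants.
   Context: $\mathsf{N}=C^\infty(\mathbb{R}^n)$ with coordinates $x_1,\dots,x_n$, $\mathsf{Pol}=\mathbb{R}[x_1,\dots,x_n]$. The Hochschild coboundary of a linear map $\psi$ is $\delta\psi(f,g)=f\psi(g)-\psi(fg)+\psi(f)g$. For a function $F$ of $k$ arguments, $\sum_{(i_1,\ldots,i_k)}F(x_{i_1},\ldots,x_{i_k})$ denotes the sum over the $k$ cyclic permutations of $(x_{i_1},\ldots,x_{i_k})$; here the arguments are $x_{i_1}$ and the product $x_{i_2}\cdots x_{i_k}$ of the remaining cyclically ordered variables. *)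

From HB Require Import structures.
From mathcomp Require Import all_boot all_order all_algebra.
From mathcomp Require Import mpoly.
From mathcomp Require Import all_classical all_reals all_analysis.
Set Implicit Arguments. Unset Strict Implicit. Unset Printing Implicit Defensive.
Import Order.TTheory GRing.Theory Num.Theory.
Import numFieldNormedType.Exports.
Local Open Scope ring_scope.

(* Points of R^n are row vectors 'rV[R]_n ; N = C^oo(R^n) is the set of
   functions 'rV[R]_n -> R all of whose iterated partial derivatives exist
   and are continuous. *)

Notation Pol n R := (mpoly.mpoly n R).

Section Defs.
Variables (R : realType) (n : nat).

Definition unitv (i : 'I_n) : 'rV[R]_n := delta_mx 0 i.

Definition pderivs (s : seq 'I_n) (f : 'rV[R]_n -> R) : 'rV[R]_n -> R :=
  foldr (fun i g => (fun x => 'D_(unitv i) g x)) f s.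

Definition smooth (f : 'rV[R]_n -> R) : Prop :=
  forall s : seq 'I_n,
    continuous (pderivs s f) /\
    forall (i : 'I_n) (x : 'rV[R]_n), derivable (pderivs s f) x (unitv i).

(* linear differential operator with smooth coefficients,
   given by a finite list of (coefficient, multi-index as sequence of
   partial derivatives):  D f = sum_j a_j * d^{s_j} f *)
Definition diffop_apply (L : seq (('rV[R]_n -> R) * seq 'I_n))
    (f : 'rV[R]_n -> R) : 'rV[R]_n -> R :=
  fun x => \sum_(c <- L) c.1 x * pderivs c.2 f x.

Definition is_diffop (D : ('rV[R]_n -> R) -> ('rV[R]_n -> R)) : Prop :=
  exists L : seq (('rV[R]_n -> R) * seq 'I_n),
    (forall c, c \in L -> smooth c.1) /\
    (forall f, smooth f -> D f = diffop_apply L f).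

Definition bidiffop_apply (L : seq (('rV[R]_n -> R) * seq 'I_n * seq 'I_n))
    (f g : 'rV[R]_n -> R) : 'rV[R]_n -> R :=
  fun x => \sum_(c <- L) c.1.1 x * pderivs c.1.2 f x * pderivs c.2 g x.

Definition is_bidiffop (B : ('rV[R]_n -> R) -> ('rV[R]_n -> R) -> ('rV[R]_n -> R))
  : Prop :=
  exists L : seq (('rV[R]_n -> R) * seq 'I_n * seq 'I_n),
    (forall c, c \in L -> smooth c.1.1) /\
    (forall f g, smooth f -> smooth g -> B f g = bidiffop_apply L f g).

Definition polX (i : 'I_n) : mpoly.mpoly n R := mpoly.mpolyX R (mpoly.mnm1 i).
Definition polfun (p : mpoly.mpoly n R) : 'rV[R]_n -> R :=
  fun x => mpoly.meval (fun i => x ord0 i) p.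

Definition hoch (psi : mpoly.mpoly n R -> 'rV[R]_n -> R) (f g : mpoly.mpoly n R) : 'rV[R]_n -> R :=
  fun x => polfun f x * psi g x - psi (f * g) x + psi f x * polfun g x.

(* sum over the k cyclic permutations of (x_{i_1},...,x_{i_k}) of
   F(x_{i_1}, x_{i_2} ... x_{i_k}) *)
Definition cycsum (F : mpoly.mpoly n R -> mpoly.mpoly n R -> 'rV[R]_n -> R) (s : seq 'I_n)
  : 'rV[R]_n -> R :=
  fun x => \sum_(j < size s)
     F (head 0 (rot j (map polX s))) (\prod_(q <- behead (rot j (map polX s))) q) x.

End Defs.

From HB Require Import structures.
From mathcomp Require Import all_boot all_order all_algebra.
From mathcomp Require Import mpoly.
From mathcomp Require Import all_classical all_reals all_analysis.
From mathcomp Require Import ring zify.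
Import Order.TTheory GRing.Theory Num.Theory.
Import numFieldNormedType.Exports.
Local Open Scope ring_scope.

(* Write phi as a finite sum of terms a d^s f d^t g.  Because phi vanishes on
   constants, phi(x_a, g) only sees the terms with s = [a] and t nonempty, and
   equals the sum of their a d^t g.  Put D := - sum a/(|t|+1) d^t d_a over these
   terms.  For a monomial x_s of degree k >= 2, the cyclic identity together
   with psi(x_i) = 0 reads
     k psi(x_s) = sum_j x_{s_j} psi(x_{s\j}) - sum_j phi(x_{s_j}, x_{s\j}),
   and by induction on k and the Euler-type identity
     sum_j x_{s_j} d^g x_{s\j} = (k - |g|) d^g x_s
   the right-hand side is k D(x_s).  Linearity then gives psi = D on Pol. *)

Lemma derive_coord (R : numFieldType) m k (i : 'I_m) (j : 'I_k) (M v : 'M[R]_(m, k)) :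
  'D_v (fun N : 'M[R]_(m, k) => N i j) M = v i j.
Proof.
rewrite deriveE; last exact: differentiable_coord.
have lin : linear (fun N : 'M[R]_(m, k) => N i j) by move=> a A B; rewrite !mxE.
pose f : {linear 'M[R]_(m, k) -> R} :=
  HB.pack (fun N : 'M[R]_(m, k) => N i j) (GRing.isLinear.Build _ _ _ _ _ lin).
by rewrite (_ : (fun _ => _) = f) // diff_lin //; exact: coord_continuous.
Qed.

Section PolynomialFunctions.
Context {R : realType} {n : nat}.
Implicit Types (p q : {mpoly R[n]}) (s : seq 'I_n) (x : 'rV[R]_n).

Lemma polfunD p q x : polfun (p + q) x = polfun p x + polfun q x.
Proof. by rewrite /polfun mevalD. Qed.

Lemma polfunM p q x : polfun (p * q) x = polfun p x * polfun q x.
Proof. by rewrite /polfun mevalM. Qed.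

Lemma polfunZ c p x : polfun (c *: p) x = c * polfun p x.
Proof. by rewrite /polfun mevalZ. Qed.

Lemma polfun0 x : polfun (0 : {mpoly R[n]}) x = 0.
Proof. by rewrite /polfun meval0. Qed.

Lemma polfun_sum (I : Type) (r : seq I) (F : I -> {mpoly R[n]}) x :
  polfun (\sum_(i <- r) F i) x = \sum_(i <- r) polfun (F i) x.
Proof. exact: (big_morph _ (fun p q => polfunD p q x) (polfun0 x)). Qed.

Lemma polfunC (c : R) : polfun (c%:MP : {mpoly R[n]}) = fun=> c.
Proof. by apply: funext => x; rewrite /polfun mevalC. Qed.

Lemma polfunX (i : 'I_n) : polfun (polX R i) = fun x => x ord0 i.
Proof. by apply: funext => x; rewrite /polfun /polX mevalXU. Qed.

Definition mderiv_analytic p : Prop :=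
  continuous (polfun p) /\ forall i x,
    derivable (polfun p) x (unitv R i) /\
    'D_(unitv R i) (polfun p) x = polfun (mderiv i p) x.

Lemma mderiv_analyticC (c : R) : mderiv_analytic c%:MP.
Proof.
rewrite /mderiv_analytic polfunC; split; first exact: cst_continuous.
move=> i x; split; first exact: derivable_cst.
by rewrite derive_cst mderivC polfun0.
Qed.

Lemma mderiv_polX (i j : 'I_n) : mderiv i (polX R j) = (j == i)%:R *: 1.
Proof.
rewrite /polX mderivX mnm1E; case: eqP => [->|_]; last by rewrite mulr0n !scale0r.
have -> : (U_(i) - U_(i) = 0)%MM by apply/mnmP => k; rewrite mnmBE mnm0E subnn.
by rewrite mpolyX0.
Qed.

Lemma mderiv_analyticX (j : 'I_n) : mderiv_analytic (polX R j).
Proof.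
rewrite /mderiv_analytic polfunX; split; first exact: coord_continuous.
move=> i x; split; first exact/diff_derivable/differentiable_coord.
by rewrite derive_coord /unitv mxE mderiv_polX polfunZ -mpolyC1 polfunC mulr1 eq_sym.
Qed.

Lemma mderiv_analyticD p q :
  mderiv_analytic p -> mderiv_analytic q -> mderiv_analytic (p + q).
Proof.
rewrite /mderiv_analytic => -[cp dp] [cq dq].
have -> : polfun (p + q) = polfun p + polfun q by apply: funext => x; rewrite polfunD.
split; first by move=> x; apply: continuousD; [exact: cp|exact: cq].
move=> i x; have [d1 e1] := dp i x; have [d2 e2] := dq i x.
split; first exact: derivableD.
by rewrite deriveD // e1 e2 mderivD polfunD.
Qed.

Lemma mderiv_analyticM p q :
  mderiv_analytic p -> mderiv_analytic q -> mderiv_analytic (p * q).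
Proof.
rewrite /mderiv_analytic => -[cp dp] [cq dq].
have -> : polfun (p * q) = polfun p * polfun q by apply: funext => x; rewrite polfunM.
split; first by move=> x; apply: continuousM; [exact: cp|exact: cq].
move=> i x; have [d1 e1] := dp i x; have [d2 e2] := dq i x.
split; first exact: derivableM.
rewrite deriveM // e1 e2 mderivM polfunD !polfunM /=.
by rewrite /GRing.scale /= addrC mulrC [X in _ + X]mulrC.
Qed.

Lemma mpoly_mderiv_analytic p : mderiv_analytic p.
Proof.
have analytic1 : mderiv_analytic 1 by rewrite -mpolyC1; exact: mderiv_analyticC.
elim/mpolyind: p => [|c m p _ _ Hp]; first by rewrite -mpolyC0; exact: mderiv_analyticC.
apply: mderiv_analyticD => //; rewrite -mul_mpolyC.
apply: mderiv_analyticM; first exact: mderiv_analyticC.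
rewrite mpolyXE_id; apply: (big_ind mderiv_analytic) => // [p1 p2|i _].
  exact: mderiv_analyticM.
elim: (m i) => [|k IH]; first by rewrite expr0.
by rewrite exprS; apply: mderiv_analyticM => //; exact: mderiv_analyticX.
Qed.

Definition mders s p : {mpoly R[n]} := foldr (@mderiv n R) p s.

Lemma mders0 s : mders s 0 = 0.
Proof. by elim: s => //= a s ->; rewrite mderiv0. Qed.

Lemma mdersD s p q : mders s (p + q) = mders s p + mders s q.
Proof. by elim: s => //= a s ->; rewrite mderivD. Qed.

Lemma mdersZ s (c : R) p : mders s (c *: p) = c *: mders s p.
Proof. by elim: s => //= a s ->; rewrite mderivZ. Qed.

Lemma mders_sum s (I : Type) (r : seq I) (F : I -> {mpoly R[n]}) :
  mders s (\sum_(i <- r) F i) = \sum_(i <- r) mders s (F i).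
Proof. exact: (big_morph _ (mdersD s) (mders0 s)). Qed.

Lemma mders_cat s1 s2 p : mders (s1 ++ s2) p = mders s1 (mders s2 p).
Proof. by rewrite /mders foldr_cat. Qed.

Lemma mders_mderiv s i p : mders s (mderiv i p) = mderiv i (mders s p).
Proof. by elim: s => //= a s ->; rewrite mderiv_comm. Qed.

Lemma mders1 s : mders s 1 = if s is [::] then 1 else 0.
Proof.
elim: s => [//|b s IH] /=; rewrite IH; case: s IH => [|c s] _ /=.
  by rewrite -mpolyC1 mderivC.
exact: mderiv0.
Qed.

Lemma mders_polX (a : 'I_n) s : mders s (polX R a) =
  if s is [::] then polX R a else if s is [:: b] then (a == b)%:R *: 1 else 0.
Proof.
elim: s => [//|b s IH] /=; rewrite IH; case: s IH => [|c s] _ /=; first exact: mderiv_polX.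
case: s => [|? ?]; last exact: mderiv0.
by rewrite mderivZ -mpolyC1 mderivC scaler0.
Qed.

Lemma pderivs_polfun s p : pderivs s (polfun p) = polfun (mders s p).
Proof.
elim: s => [//|a s IH] /=; apply: funext => x; rewrite IH.
by have [_ /(_ a x) [_ ->]] := mpoly_mderiv_analytic (mders s p).
Qed.

Lemma smooth_polfun p : smooth (polfun p).
Proof.
move=> s; rewrite pderivs_polfun; have [c d] := mpoly_mderiv_analytic (mders s p).
by split => // i x; have [] := d i x.
Qed.

Lemma pderivs_cst s (c : R) :
  pderivs s (fun=> c) = fun=> if s is [::] then c else 0.
Proof.
elim: s => [//|a s IH] /=; apply: funext => x; rewrite IH.
by case: s IH => [|? ?] _; exact: derive_cst.
Qed.

Lemma smooth_cst (c : R) : smooth (fun _ : 'rV[R]_n => c).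
Proof.
move=> s; rewrite pderivs_cst; split.
  by case: s => [|? ?]; exact: cst_continuous.
by move=> i x; case: s => [|? ?]; exact: derivable_cst.
Qed.

Lemma smoothMl (k : R) (f : 'rV[R]_n -> R) : smooth f -> smooth (fun x => k * f x).
Proof.
move=> sf.
have E s : pderivs s (fun x => k * f x) = (fun x => k * pderivs s f x).
  elim: s => [//|a s IH] /=; apply: funext => x; rewrite IH.
  by have [_ /(_ a x) /(deriveZ k)] := sf s.
move=> s; rewrite E; have [c d] := sf s; split.
  by move=> x; apply: continuousM; [exact: cst_continuous|exact: c].
by move=> i x; apply: derivableZ.
Qed.

End PolynomialFunctions.

Section Monomials.
Context {R : realType} {n : nat}.
Implicit Types (s g : seq 'I_n) (x : 'rV[R]_n).

Definition prodX s : {mpoly R[n]} := \prod_(i <- s) polX R i.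

Definition remove_at (j : nat) s := take j s ++ drop j.+1 s.

Lemma size_remove_at j s : (j < size s)%N -> size (remove_at j s) = (size s).-1.
Proof. by move=> js; rewrite /remove_at size_cat size_take size_drop js; lia. Qed.

Lemma prodX_cat s1 s2 : prodX (s1 ++ s2) = prodX s1 * prodX s2.
Proof. by rewrite /prodX big_cat. Qed.

Lemma prodX_nseq k (i : 'I_n) : prodX (nseq k i) = polX R i ^+ k.
Proof. by elim: k => [|k IH]; rewrite /prodX ?big_nil //= big_cons -/(prodX _) IH exprS. Qed.

Lemma mpolyX_prodX (m : 'X_{1..n}) : exists s, 'X_[m] = prodX s.
Proof.
exists (\big[cat/[::]]_(i < n) nseq (m i) i).
rewrite (big_morph prodX prodX_cat (big_nil _ _ _ _)) mpolyXE_id.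
by apply: eq_bigr => i _; rewrite prodX_nseq.
Qed.

Lemma prodX_remove_at (i0 : 'I_n) j s : (j < size s)%N ->
  polX R (nth i0 s j) * prodX (remove_at j s) = prodX s.
Proof.
move=> js; rewrite /prodX /remove_at -[in RHS](cat_take_drop j s) (drop_nth i0 js).
by rewrite !big_cat big_cons /= mulrCA.
Qed.

Lemma cycsum_prodX (F : {mpoly R[n]} -> {mpoly R[n]} -> 'rV[R]_n -> R) s (i0 : 'I_n) :
  cycsum F s =
  fun x => \sum_(j < size s) F (polX R (nth i0 s j)) (prodX (remove_at j s)) x.
Proof.
apply: funext => x; apply: eq_bigr => j _.
rewrite -map_rot /rot (drop_nth i0 (ltn_ord j)) /= big_map /prodX /remove_at !big_cat /=.
by rewrite mulrC.
Qed.

Lemma mderiv_prodX (i0 a : 'I_n) s :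
  mderiv a (prodX s) = \sum_(j < size s) (nth i0 s j == a)%:R *: prodX (remove_at j s).
Proof.
elim: s => [|b s IH]; first by rewrite big_ord0 /prodX big_nil -mpolyC1 mderivC.
rewrite big_ord_recl /prodX big_cons -/(prodX _) mderivM mderiv_polX IH.
congr (_ + _); first by rewrite /remove_at /= drop0 -scalerAl mul1r.
rewrite mulr_sumr; apply: eq_bigr => j _.
by rewrite /remove_at /= /prodX big_cons -/(prodX _) -scalerAr.
Qed.

Lemma euler_prodX (i0 : 'I_n) s g :
  \sum_(j < size s) polX R (nth i0 s j) * mders g (prodX (remove_at j s))
  = ((size s)%:R - (size g)%:R) *: mders g (prodX s).
Proof.
elim: g => [|a g IH] /=.
  rewrite (eq_bigr (fun=> prodX s)) => [|j _]; last exact: prodX_remove_at.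
  by rewrite sumr_const card_ord mulr0n subr0 scaler_nat.
have leibniz (j : 'I_(size s)) :
    polX R (nth i0 s j) * mderiv a (mders g (prodX (remove_at j s))) =
    mderiv a (polX R (nth i0 s j) * mders g (prodX (remove_at j s)))
    - (nth i0 s j == a)%:R *: mders g (prodX (remove_at j s)).
  by rewrite mderivM mderiv_polX -scalerAl mul1r addrC addKr.
have sum_mderiv : \sum_(j < size s) (nth i0 s j == a)%:R *: mders g (prodX (remove_at j s))
    = mderiv a (mders g (prodX s)).
  rewrite -mders_mderiv (mderiv_prodX i0) mders_sum.
  by apply: eq_bigr => j _; rewrite mdersZ.
rewrite (eq_bigr _ (fun j _ => leibniz j)) sumrB sum_mderiv -(mders_sum [:: a]) /= IH.
rewrite mderivZ -[X in _ - X]scale1r -scalerBl -natr1; congr (_ *: _); ring.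
Qed.

End Monomials.

Local Notation bidiff_term R n := (('rV[R]_n -> R) * seq 'I_n * seq 'I_n)%type.

Section BidifferentialOperators.
Context {R : realType} {n : nat}.
Implicit Types (x : 'rV[R]_n) (c : bidiff_term R n).

Lemma pderivs_polX (s : seq 'I_n) (a : 'I_n) x :
  pderivs s (polfun (polX R a)) x = (s == [::])%:R * x ord0 a + (s == [:: a])%:R.
Proof.
rewrite pderivs_polfun mders_polX.
case: s => [|b [|c s]] /=.
- by rewrite polfunX mul1r addr0.
- by rewrite polfunZ -mpolyC1 polfunC mulr1 mul0r add0r eqseq_cons andbT eq_sym.
- by rewrite polfun0 mul0r add0r eqseq_cons /= andbF.
Qed.

Definition first_order_left c := (size c.1.2 == 1%N) && (c.2 != [::]).

Lemma bidiff_term_polX (a : 'I_n) (g : 'rV[R]_n -> R) x c :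
  c.1.1 x * pderivs c.1.2 (polfun (polX R a)) x * pderivs c.2 g x =
    x ord0 a * (c.1.1 x * pderivs c.1.2 (fun=> 1) x * pderivs c.2 g x)
  + g x * (c.1.1 x * pderivs c.1.2 (polfun (polX R a)) x * pderivs c.2 (fun=> 1) x)
  - g x * x ord0 a * (c.1.1 x * pderivs c.1.2 (fun=> 1) x * pderivs c.2 (fun=> 1) x)
  + (if first_order_left c then (c.1.2 == [:: a])%:R * c.1.1 x * pderivs c.2 g x
     else 0).
Proof.
case: c => [[f s] t] /=; rewrite pderivs_polX !pderivs_cst /first_order_left /=.
by case: s => [|b [|b' s']]; case: t => [|t0 t'] /=; rewrite ?eqseq_cons ?andbF /=; ring.
Qed.

Lemma bidiffop_apply_polX_left (A : seq (bidiff_term R n)) a g x :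
  bidiffop_apply A (polfun (polX R a)) g x =
    x ord0 a * bidiffop_apply A (fun=> 1) g x
  + g x * bidiffop_apply A (polfun (polX R a)) (fun=> 1) x
  - g x * x ord0 a * bidiffop_apply A (fun=> 1) (fun=> 1) x
  + \sum_(c <- A | first_order_left c) (c.1.2 == [:: a])%:R * c.1.1 x * pderivs c.2 g x.
Proof.
rewrite /bidiffop_apply (eq_bigr _ (fun c _ => bidiff_term_polX a g x c)).
by rewrite !big_split /= sumrN -!mulr_sumr -big_mkcond.
Qed.

Context {phi : ('rV[R]_n -> R) -> ('rV[R]_n -> R) -> 'rV[R]_n -> R}
  {A : seq (bidiff_term R n)}.
Hypothesis phiE : forall f g, smooth f -> smooth g -> phi f g = bidiffop_apply A f g.
Hypothesis phi_cst : forall (c : R) f, smooth f ->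
  phi (fun=> c) f = (fun=> 0) /\ phi f (fun=> c) = (fun=> 0).

Lemma bidiffop_polX_left a g x : smooth g ->
  phi (polfun (polX R a)) g x =
  \sum_(c <- A | first_order_left c) (c.1.2 == [:: a])%:R * c.1.1 x * pderivs c.2 g x.
Proof.
move=> sg; have sX := smooth_polfun (polX R a); have s1 := @smooth_cst R n 1.
rewrite phiE // bidiffop_apply_polX_left -!phiE //.
rewrite (proj1 (phi_cst 1 g sg)) (proj2 (phi_cst 1 _ sX)) (proj1 (phi_cst 1 _ s1)) /=.
by rewrite !mulr0 subr0 !add0r.
Qed.

End BidifferentialOperators.

Section PsiIsDifferential.
Context {R : realType} {n : nat}.
Implicit Types (p q : {mpoly R[n]}) (s : seq 'I_n) (x : 'rV[R]_n) (c : bidiff_term R n).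
Variable A : seq (bidiff_term R n).

(* The weight -1/(|t|+1) is chosen so that the Euler defect |t|+1 of the
   derivative d^t d_i cancels the first-order term a d^t of phi. *)
Definition Dcoef c x := - ((size c.2).+1%:R)^-1 * c.1.1 x.
Definition Dindex c := c.2 ++ c.1.2.

Definition Dlist := [seq (Dcoef c, Dindex c) | c <- A & first_order_left c].

Definition Dpoly q x :=
  \sum_(c <- A | first_order_left c) Dcoef c x * polfun (mders (Dindex c) q) x.

Lemma diffop_Dlist q : diffop_apply Dlist (polfun q) = Dpoly q.
Proof.
apply: funext => x; rewrite /diffop_apply big_map big_filter.
by apply: eq_bigr => c _ /=; rewrite pderivs_polfun.
Qed.

Lemma diffop_Dlist_cst (a : R) : diffop_apply Dlist (fun=> a) = fun=> 0.
Proof.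
apply: funext => x; rewrite /diffop_apply big_map big_filter big1 // => -[[f s] t].
by rewrite /first_order_left pderivs_cst /Dindex /= => /andP[_]; case: t => //= *; rewrite mulr0.
Qed.

Lemma Dpoly_linear (a : R) p q x : Dpoly (a *: p + q) x = a * Dpoly p x + Dpoly q x.
Proof.
rewrite /Dpoly mulr_sumr -big_split; apply: eq_bigr => c _ /=.
by rewrite mdersD mdersZ polfunD polfunZ; ring.
Qed.

Lemma Dpoly0 x : Dpoly 0 x = 0.
Proof. by rewrite /Dpoly big1 // => c _; rewrite mders0 polfun0 mulr0. Qed.

Lemma Dpoly1 x : Dpoly 1 x = 0.
Proof.
rewrite /Dpoly big1 // => -[[f s] t]; rewrite /first_order_left /Dindex mders1 /=.
by case/andP=> _; case: t => //= *; rewrite polfun0 mulr0.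
Qed.

Lemma Dpoly_polX (a : 'I_n) x : Dpoly (polX R a) x = 0.
Proof.
rewrite /Dpoly big1 // => -[[f s] t]; rewrite /first_order_left /Dindex /= => /andP[].
case: s => [|i [|]] // _; case: t => [|t0 t] // _.
by rewrite mders_polX; case: t => [|? ?] /=; rewrite polfun0 mulr0.
Qed.

Lemma Dterm_cyclic (i0 : 'I_n) s c x : first_order_left c ->
  \sum_(j < size s) polfun (polX R (nth i0 s j)) x *
      (Dcoef c x * polfun (mders (Dindex c) (prodX (remove_at j s))) x)
  - \sum_(j < size s) (c.1.2 == [:: nth i0 s j])%:R * c.1.1 x *
      pderivs c.2 (polfun (prodX (remove_at j s))) x
  = (size s)%:R * (Dcoef c x * polfun (mders (Dindex c) (prodX s)) x).
Proof.
case: c => [[a si] t]; rewrite /first_order_left /Dcoef /Dindex /= => /andP[].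
case: si => [|i [|]] //= _ _; set K := - ((size t).+1%:R)^-1 * a x.
have factor_K : \sum_(j < size s) polfun (polX R (nth i0 s j)) x *
      (K * polfun (mders (t ++ [:: i]) (prodX (remove_at j s))) x) =
    K * polfun (\sum_(j < size s)
      polX R (nth i0 s j) * mders (t ++ [:: i]) (prodX (remove_at j s))) x.
  by rewrite polfun_sum mulr_sumr; apply: eq_bigr => j _; rewrite polfunM; ring.
have phi_part : \sum_(j < size s) ([:: i] == [:: nth i0 s j])%:R * a x *
      pderivs t (polfun (prodX (remove_at j s))) x =
    a x * polfun (mders (t ++ [:: i]) (prodX s)) x.
  rewrite mders_cat /= (mderiv_prodX i0) mders_sum polfun_sum mulr_sumr.
  apply: eq_bigr => j _.
  by rewrite pderivs_polfun mdersZ polfunZ eqseq_cons andbT eq_sym; ring.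
rewrite factor_K phi_part euler_prodX polfunZ size_cat addn1 /K.
have nz : (size t).+1%:R != 0 :> R by rewrite pnatr_eq0.
by field.
Qed.

Variable phi : ('rV[R]_n -> R) -> ('rV[R]_n -> R) -> 'rV[R]_n -> R.
Hypothesis phiE : forall f g, smooth f -> smooth g -> phi f g = bidiffop_apply A f g.
Hypothesis phi_cst : forall (c : R) f, smooth f ->
  phi (fun=> c) f = (fun=> 0) /\ phi f (fun=> c) = (fun=> 0).

Lemma Dpoly_cyclic (i0 : 'I_n) s x :
  \sum_(j < size s) polfun (polX R (nth i0 s j)) x * Dpoly (prodX (remove_at j s)) x
  - \sum_(j < size s)
      phi (polfun (polX R (nth i0 s j))) (polfun (prodX (remove_at j s))) x
  = (size s)%:R * Dpoly (prodX s) x.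
Proof.
under [X in _ - X]eq_bigr do
  rewrite (bidiffop_polX_left phiE phi_cst _ _ _ (smooth_polfun _)).
rewrite /Dpoly mulr_sumr; under [X in X - _]eq_bigr do rewrite mulr_sumr.
rewrite exchange_big [X in _ - X]exchange_big /= -sumrB.
by apply: eq_bigr => c; exact: Dterm_cyclic.
Qed.

Variable psi : {mpoly R[n]} -> 'rV[R]_n -> R.
Hypothesis psi_linear : forall (a : R) p q, psi (a *: p + q) = (fun x => a * psi p x + psi q x).
Hypothesis psi1 : psi 1 = fun=> 0.
Hypothesis psiX : forall i, psi (polX R i) = fun=> 0.
Hypothesis psi_cyclic : forall s, (2 <= size s)%N ->
  cycsum (hoch psi) s = cycsum (fun f g => phi (polfun f) (polfun g)) s.

Lemma psi0 : psi 0 = fun=> 0.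
Proof.
have := psi_linear (-1) 1 1; rewrite scaleN1r addNr psi1 => ->.
by apply: funext => x; rewrite mulr0 addr0.
Qed.

Lemma psi_prodX s : psi (prodX s) = Dpoly (prodX s).
Proof.
have [k] := ubnP (size s); elim: k s => // k IH s; rewrite ltnS => sk.
case: s sk => [|b [|b' s']] sk.
- by rewrite /prodX big_nil psi1; apply: funext => x; rewrite Dpoly1.
- by rewrite /prodX big_seq1 psiX; apply: funext => x; rewrite Dpoly_polX.
set s := [:: b, b' & s'] in sk *; apply: funext => x.
have IHj (j : 'I_(size s)) : psi (prodX (remove_at j s)) = Dpoly (prodX (remove_at j s)).
  by apply: IH; rewrite size_remove_at //; move: sk; rewrite /=; lia.
have := congr1 (fun h => h x) (psi_cyclic s isT).
rewrite !(cycsum_prodX _ s b) /hoch /=.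
rewrite (eq_bigr (fun j : 'I_(size s) =>
  polfun (polX R (nth b s j)) x * Dpoly (prodX (remove_at j s)) x - psi (prodX s) x));
  last by move=> j _; rewrite IHj prodX_remove_at // psiX mul0r addr0.
rewrite sumrB sumr_const card_ord => cyclic_x.
have nz : (size s)%:R != 0 :> R by rewrite pnatr_eq0.
apply: (mulfI nz); rewrite -(Dpoly_cyclic b) -cyclic_x -mulr_natl; ring.
Qed.

Lemma psi_Dpoly q : psi q = Dpoly q.
Proof.
elim/mpolyind: q => [|c m p _ _ IHp].
  by rewrite psi0; apply: funext => x; rewrite Dpoly0.
rewrite psi_linear IHp; apply: funext => x; rewrite Dpoly_linear.
by have [s ->] := mpolyX_prodX (R:=R) m; rewrite psi_prodX.
Qed.

End PsiIsDifferential.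

Theorem lemma2 (R : realType) (n : nat)
  (psi : Pol n R -> 'rV[R]_n -> R)
  (phi : ('rV[R]_n -> R) -> ('rV[R]_n -> R) -> ('rV[R]_n -> R)) :
  (* psi : Pol -> N is linear *)
  (forall p, smooth (psi p)) ->
  (forall (a : R) (p q : Pol n R), psi (a *: p + q) = (fun x => a * psi p x + psi q x)) ->
  psi 1 = (fun _ => 0) ->
  (forall i : 'I_n, psi (polX R i) = (fun _ => 0)) ->
  (* phi is a bidifferential operator on N vanishing on constants *)
  is_bidiffop phi ->
  (forall (c : R) (f : 'rV[R]_n -> R), smooth f ->
     phi (fun _ => c) f = (fun _ => 0) /\ phi f (fun _ => c) = (fun _ => 0)) ->
  (* the cyclic-sum identity for all k >= 2 and all i_1..i_k *)
  (forall s : seq 'I_n, (2 <= size s)%N ->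
     cycsum (hoch psi) s = cycsum (fun f g => phi (polfun f) (polfun g)) s) ->
  (* conclusion *)
  exists D : ('rV[R]_n -> R) -> ('rV[R]_n -> R),
    is_diffop D /\
    (forall c : R, D (fun _ => c) = (fun _ => 0)) /\
    (forall p : Pol n R, psi p = D (polfun p)).
Proof.
move=> _ psi_linear psi1 psiX [A [A_smooth phiE]] phi_cst psi_cyclic.
exists (diffop_apply (Dlist A)); split; [|split].
- exists (Dlist A); split => // c /mapP [c0]; rewrite mem_filter => /andP [_ c0A] ->.
  rewrite /= /Dcoef; apply: smoothMl; exact: A_smooth.
- exact: diffop_Dlist_cst.
- move=> p; rewrite diffop_Dlist.
  exact: (psi_Dpoly _ _ phiE phi_cst _ psi_linear psi1 psiX psi_cyclic).
Qed.
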